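(* Let $q$ be a power of the odd prime $p$ and let $f$ be a Dembowski–Ostrom polynomial over $\mathbb F_{q^2}$ such that $x\mapsto f(x)$ is a planar function on $\mathbb F_{q^2}$. Let $\kappa:\mathbb F_{q^2}\to\mathbb F_{q^2}$, $x\mapsto\bar x$, be an additive map with $\kappa(\kappa(x))=x$, $\overline{f(x)}=f(\bar x)$ and $\#\{y:y+\bar y=f(x+\bar x)\}=q$ for all $x\in\mathbb F_{q^2}$, and let $\mathcal U:=\{(x,y):y+\bar y=f(x+\bar x)\}\cup\{(\infty)\}$ be the corresponding unital of $\Pi(f)$. Let $\theta\in\mathbb F_{q^2}^*$ be such that for every $c\in\mathbb F_q$, $\#\{x\in\mathbb F_{q^2}:\theta_1f_0(x)-\theta_0f_1(x)=c\}$ equals $q+1$ if $c\neq0$ and $1$ if $c=0$, and let $\mathcal U_\theta:=\{(x,t\theta):x\in\mathbb F_{q^2},t\in\mathbb F_q\}\cup\{(\infty)\}$. Then $\mathcal U$ and $\mathcal U_\theta$ are not equivalent, i.e.\ no collineation of $\Pi(f)$ maps $\mathcal U_\theta$ onto $\mathcal U$.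
   Context: A Dembowski–Ostrom polynomial over $\mathbb F_{q^2}$ is one of the form $f(x)=\sum_{i,j}a_{ij}x^{p^i+p^j}$ with $a_{ij}\in\mathbb F_{q^2}$. A function $f$ on $\mathbb F_{q^2}$ is planar if $x\mapsto f(x+a)-f(x)$ is a bijection for every $a\neq0$. For planar $f$, $\Pi(f)$ is the projective plane with points $(x,y)\in\mathbb F_{q^2}^2$ and $(a)$ for $a\in\mathbb F_{q^2}\cup\{\infty\}$, lines $L_{a,b}=\{(x,f(x+a)-b):x\in\mathbb F_{q^2}\}\cup\{(a)\}$, $N_a=\{(a,y):y\in\mathbb F_{q^2}\}\cup\{(\infty)\}$ ($a,b\in\mathbb F_{q^2}$), $L_\infty=\{(a):a\in\mathbb F_{q^2}\cup\{\infty\}\}$; a collineation is a bijection of points mapping lines onto lines. A fixed $\xi\in\mathbb F_{q^2}\setminus\mathbb F_q$ is chosen; $\theta=\theta_0+\theta_1\xi$ and $f(x)=f_0(x)+f_1(x)\xi$ with components in $\mathbb F_q$. *)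

From HB Require Import structures.
From mathcomp Require Import all_boot all_order all_algebra all_field.
Set Implicit Arguments. Unset Strict Implicit. Unset Printing Implicit Defensive.
Import GRing.Theory.
Local Open Scope ring_scope.

(* Points of Pi(f): inl (x,y) is the affine point (x,y);
   inr (Some a) is the point (a) at infinity, inr None is (infinity). *)
Definition point (F : finFieldType) : finType := ((F * F) + option F)%type.

(* Dembowski-Ostrom: f(x) = sum_{i,j} a_ij x^(p^i+p^j); since x^(p^(2n)) = x on
   F_{p^(2n)}, indices can be taken below 2n = the degree of F over F_p. *)
Definition is_DO (F : finFieldType) (p m : nat) (f : F -> F) : Prop :=
  exists a : nat -> nat -> F,
    forall x, f x = \sum_(i < m) \sum_(j < m) a i j * x ^+ (p ^ i + p ^ j).

Definition planar (F : finFieldType) (f : F -> F) : Prop :=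
  forall a : F, a != 0 -> bijective (fun x => f (x + a) - f x).

Section Plane.
Variables (F : finFieldType) (f : F -> F).

Definition line_L (a b : F) : {set point F} :=
  [set P : point F | match P with
                     | inl (x, y) => y == f (x + a) - b
                     | inr (Some c) => c == a
                     | inr None => false end].

Definition line_N (a : F) : {set point F} :=
  [set P : point F | match P with
                     | inl (x, _) => x == a
                     | inr (Some _) => false
                     | inr None => true end].

Definition line_inf : {set point F} :=
  [set P : point F | match P with inl _ => false | inr _ => true end].

Definition is_line (S : {set point F}) : Prop :=
  (exists a b, S = line_L a b) \/ (exists a, S = line_N a) \/ S = line_inf.

Definition collineation (phi : point F -> point F) : Prop :=
  bijective phi /\ forall S, is_line S -> is_line (phi @: S).

End Plane.

Definition unital_U (F : finFieldType) (f kappa : F -> F) : {set point F} :=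
  [set P : point F | match P with
                     | inl (x, y) => y + kappa y == f (x + kappa x)
                     | inr (Some _) => false
                     | inr None => true end].

Definition unital_Utheta (F : finFieldType) (q : nat) (theta : F) : {set point F} :=
  [set P : point F | match P with
                     | inl (x, y) => [exists t : F, (t ^+ q == t) && (y == t * theta)]
                     | inr (Some _) => false
                     | inr None => true end].

(* The unital U has polar lines: for a point Q off U, the points of contact of
   the tangents through Q all lie on one line, namely L_{kappa x, kappa y} for
   Q = (x, y) and N_{kappa a} for Q = (a).  A collineation mapping U_theta onto U
   would transport this to U_theta, where it fails: for z1 with
   theta1 f0 z1 - theta0 f1 z1 = 1 the point Q = (0, f z1) is off U_theta, and for
   each of the q + 1 solutions z of theta1 f0 z - theta0 f1 z = 1 the line
   L_{z, f z - f z1} through Q touches U_theta exactly at (-z, f z1 - f z), since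
   f w lies in F_q theta only for w = 0.  Such a point lies on L_{a,b} only if
   f (z - a/2) takes one prescribed value, which by planarity happens for at most
   two z (f u = f v forces u = v or u = -v); so no three contact points are
   collinear. *)

From HB Require Import structures.
From mathcomp Require Import all_boot all_order all_algebra all_field.
From mathcomp Require Import ring.
Import GRing.Theory.
Set Implicit Arguments. Unset Strict Implicit. Unset Printing Implicit Defensive.
Local Open Scope ring_scope.

Definition polar (U V : zmodType) (f : U -> V) (u v : U) : V :=
  f (u + v) - f u - f v.

Lemma pchar_natX (R : nzRingType) (p k : nat) :
  p \in [pchar R] -> ([pchar R]).-nat (p ^ k)%N.
Proof. by move=> pR; rewrite (eq_pnat _ (pcharf_eq pR)) pnatX pnat_id ?(pcharf_prime pR). Qed.

Lemma exprBn_pchar (R : comNzRingType) (x y : R) n :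
  ([pchar R]).-nat n -> (x - y) ^+ n = x ^+ n - y ^+ n.
Proof. by move=> pn; rewrite exprDn_pchar // exprNn_pchar. Qed.

Lemma pchar_odd_two_neq0 (R : nzRingType) (p : nat) :
  p \in [pchar R] -> odd p -> (2 : R) != 0.
Proof.
move=> pR p_odd; rewrite -(dvdn_pcharf pR 2); apply/negP => /(dvdn_leq (isT : (0 < 2)%N)).
by rewrite leqNgt odd_prime_gt2 // (pcharf_prime pR).
Qed.

Section DembowskiOstrom.
Variables (F : finFieldType) (p m : nat) (f : F -> F).
Hypothesis f_DO : is_DO p m f.

Lemma DO_polarDl : p \in [pchar F] ->
  forall u u' v, polar f (u + u') v = polar f u v + polar f u' v.
Proof.
move=> pF u u' v; have [a fE] := f_DO.
have frobD k (x y : F) : (x + y) ^+ (p ^ k) = x ^+ (p ^ k) + y ^+ (p ^ k).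
  exact/exprDn_pchar/pchar_natX.
have polarE w w' : polar f w w' = \sum_(i < m) \sum_(j < m)
    a i j * (w ^+ (p ^ i) * w' ^+ (p ^ j) + w' ^+ (p ^ i) * w ^+ (p ^ j)).
  rewrite /polar !fE -!sumrB; apply: eq_bigr => i _; rewrite -!sumrB.
  by apply: eq_bigr => j _; rewrite !exprD !frobD; ring.
rewrite !polarE -big_split; apply: eq_bigr => i _; rewrite -big_split.
by apply: eq_bigr => j _ /=; rewrite !frobD; ring.
Qed.

Lemma DO_fN : odd p -> forall x, f (- x) = f x.
Proof.
move=> p_odd x; have [a fE] := f_DO; rewrite !fE.
apply: eq_bigr => i _; apply: eq_bigr => j _.
by rewrite exprNn -signr_odd oddD !oddX p_odd !orbT expr0 mul1r.
Qed.

End DembowskiOstrom.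

Section Polar.
Variables (R : comNzRingType) (f : R -> R).
Hypotheses (polarDl : forall u u' v, polar f (u + u') v = polar f u v + polar f u' v)
           (fN : forall x, f (- x) = f x).

Lemma fD_polar u v : f (u + v) = f u + f v + polar f u v.
Proof. by rewrite /polar; ring. Qed.

Lemma polarC u v : polar f u v = polar f v u.
Proof. by rewrite /polar (addrC u v); ring. Qed.

Lemma polarDr u v v' : polar f u (v + v') = polar f u v + polar f u v'.
Proof. by rewrite polarC polarDl !(polarC _ u). Qed.

Lemma polar0l v : polar f 0 v = 0.
Proof. by apply/esym/(addrI (polar f 0 v)); rewrite -polarDl !addr0. Qed.

Lemma polarf0 : f 0 = 0.
Proof.
by have := polar0l 0; rewrite /polar addr0 subrr sub0r => /eqP; rewrite oppr_eq0 => /eqP.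
Qed.

Lemma polarNl u v : polar f (- u) v = - polar f u v.
Proof. by apply/eqP; rewrite -subr_eq0 opprK addrC -polarDl subrr polar0l. Qed.

Lemma polarNr u v : polar f u (- v) = - polar f u v.
Proof. by rewrite polarC polarNl polarC. Qed.

Lemma polarxx x : polar f x x = 2 * f x.
Proof.
have E := fD_polar x (- x); rewrite subrr polarf0 fN polarNr in E.
by rewrite -[polar f x x]addr0 E; ring.
Qed.

Lemma f_parallelogram u v : f (u + v) + f (u - v) = 2 * f u + 2 * f v.
Proof. by rewrite !fD_polar fN polarNr; ring. Qed.

Lemma polar_add_sub u v : polar f (u + v) (u - v) = 2 * f u - 2 * f v.
Proof. by rewrite polarDl !polarDr !polarNr !polarxx polarC; ring. Qed.

End Polar.

Section PlanarQuadratic.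
Variables (F : finFieldType) (f : F -> F).
Hypotheses (polarDl : forall u u' v, polar f (u + u') v = polar f u v + polar f u' v)
           (fN : forall x, f (- x) = f x) (f_planar : planar f).

Lemma planar_polar_eq0 u e : e != 0 -> polar f u e = 0 -> u = 0.
Proof.
move=> e_neq0 /eqP; rewrite subr_eq0 => /eqP ue.
by apply: (bij_inj (f_planar e_neq0)); rewrite /= ue add0r (polarf0 polarDl) subr0.
Qed.

Lemma planar_f_eq u v : f u = f v -> u = v \/ u = - v.
Proof.
move=> fuv; have : polar f (u + v) (u - v) = 0 by rewrite polar_add_sub // fuv subrr.
have [/eqP|uv] := eqVneq (u - v) 0; first by rewrite subr_eq0 => /eqP; left.
by move=> /(planar_polar_eq0 uv)/eqP; rewrite addr_eq0 => /eqP; right.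
Qed.

Hypothesis two_neq0 : (2 : F) != 0.

Lemma reflected_graph_on_line_L y0 a b z :
  inl (- z, y0 - f z) \in line_L f a b ->
  2 * f (z - a / 2) = y0 + b - 2 * f (a / 2).
Proof.
rewrite inE /= => /eqP E.
have P := f_parallelogram polarDl fN (a / 2) (z - a / 2).
have sum_z : a / 2 + (z - a / 2) = z by ring.
have diff_z : a / 2 - (z - a / 2) = - z + a by rewrite -[a in RHS](divfK two_neq0); ring.
rewrite sum_z diff_z in P.
have fa : f (- z + a) = 2 * f (a / 2) + 2 * f (z - a / 2) - f z by rewrite -P; ring.
have -> : y0 = f (- z + a) - b + f z by rewrite -E; ring.
by rewrite fa; ring.
Qed.

Lemma reflected_graph_not_collinear y0 a b z1 z2 z3 :
  z1 != z2 -> z2 != z3 -> z3 != z1 ->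
  inl (- z1, y0 - f z1) \in line_L f a b ->
  inl (- z2, y0 - f z2) \in line_L f a b ->
  inl (- z3, y0 - f z3) \in line_L f a b -> False.
Proof.
move=> n12 n23 n31 /reflected_graph_on_line_L E1 /reflected_graph_on_line_L E2.
move=> /reflected_graph_on_line_L E3.
have f12 : f (z1 - a / 2) = f (z2 - a / 2) by apply: (mulfI two_neq0); rewrite E1 E2.
have f13 : f (z1 - a / 2) = f (z3 - a / 2) by apply: (mulfI two_neq0); rewrite E1 E3.
have [/addIr e12|e12] := planar_f_eq f12; first by rewrite e12 eqxx in n12.
have [/addIr e13|e13] := planar_f_eq f13; first by rewrite e13 eqxx in n31.
by move/eqP: n23; apply; apply: (addIr (- (a / 2))); apply: oppr_inj; rewrite -e12 -e13.
Qed.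

End PlanarQuadratic.

Section Lines.
Variables (F : finFieldType) (f : F -> F).
Hypothesis f_planar : planar f.

Lemma line_L_meet a b a' b' P1 P2 : P1 != P2 ->
  P1 \in line_L f a b -> P2 \in line_L f a b ->
  P1 \in line_L f a' b' -> P2 \in line_L f a' b' -> a = a' /\ b = b'.
Proof.
have same_b x y : a = a' -> y == f (x + a) - b -> y == f (x + a') - b' -> b = b'.
  by move=> <- /eqP-> /eqP/addrI/oppr_inj.
move: P1 P2 => [[x1 y1]|[c1|]] [[x2 y2]|[c2|]]; rewrite !inE //=.
- move=> P12 e1 e2 e1' e2'; have [aa'|aa'] := eqVneq a a'.
    by split; last exact: same_b e1 e1'.
  have a_a' : a - a' != 0 by rewrite subr_eq0.
  have jump x y : y == f (x + a) - b -> y == f (x + a') - b' ->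
      f (x + a' + (a - a')) - f (x + a') = b - b'.
    have -> : x + a' + (a - a') = x + a by ring.
    by rewrite !(eq_sym y) !subr_eq => /eqP-> /eqP->; ring.
  have x12 : x1 + a' = x2 + a'.
    by apply: (bij_inj (f_planar a_a')); rewrite /= (jump _ _ e1 e1') (jump _ _ e2 e2').
  move/eqP: P12; case.
  by move/addIr: x12 => x12; move: e1 e2; rewrite x12 => /eqP-> /eqP->.
- by move=> _ e1 /eqP-> e1' /eqP aa'; split; last exact: same_b e1 e1'.
- by move=> _ /eqP-> e2 /eqP aa' e2'; split; last exact: same_b e2 e2'.
- by move=> P12 /eqP c1a /eqP c2a; rewrite c1a c2a eqxx in P12.
Qed.

Lemma line_uniq S S' P1 P2 : is_line f S -> is_line f S' -> P1 != P2 ->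
  P1 \in S -> P2 \in S -> P1 \in S' -> P2 \in S' -> S = S'.
Proof.
move=> [[a [b ->]]|[[c ->]|->]] [[a' [b' ->]]|[[c' ->]|->]] // P12.
  by move=> P1L P2L P1L' P2L'; have [-> ->] := line_L_meet P12 P1L P2L P1L' P2L'.
all: move: P1 P2 P12 => [[x1 y1]|[c1|]] [[x2 y2]|[c2|]]; rewrite !inE //=.
all: move=> P12 *; repeat match goal with H : is_true (_ == _) |- _ => move/eqP: H => H end.
all: by subst; rewrite ?eqxx in P12.
Qed.

Lemma line_L_through x1 y1 x2 y2 : x1 != x2 ->
  exists a b, inl (x1, y1) \in line_L f a b /\ inl (x2, y2) \in line_L f a b.
Proof.
rewrite -subr_eq0 => x12; have [g _ gK] := f_planar x12.
set w := g (y1 - y2); have /= jump : f (w + (x1 - x2)) - f w = y1 - y2 := gK _.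
exists (w - x2), (f w - y2); rewrite !inE /=; split; apply/eqP.
  have -> : x1 + (w - x2) = w + (x1 - x2) by ring.
  by rewrite -[y1](subrK y2) -jump; ring.
by rewrite (addrC x2) subrK; ring.
Qed.

Lemma collineation_collinear phi M S P1 P2 P3 :
  collineation f phi -> is_line f M -> is_line f S -> P1 != P2 ->
  P1 \in S -> P2 \in S -> phi P1 \in M -> phi P2 \in M -> phi P3 \in M -> P3 \in S.
Proof.
move=> [[psi phiK _] phi_line] M_line S_line P12 P1S P2S P1M P2M.
have phi_inj := can_inj phiK.
have <- : phi @: S = M.
  apply: (line_uniq (phi_line _ S_line) M_line (P1 := phi P1) (P2 := phi P2));
    rewrite ?(inj_eq phi_inj) ?imset_f //.
by rewrite mem_imset.
Qed.

End Lines.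

Section Unital.
Variables (F : finFieldType) (f kappa : F -> F).
Hypotheses (polarDl : forall u u' v, polar f (u + u') v = polar f u v + polar f u' v)
           (two_neq0 : (2 : F) != 0)
           (kappaD : forall x y, kappa (x + y) = kappa x + kappa y)
           (kappaK : forall x, kappa (kappa x) = x)
           (kappa_f : forall x, kappa (f x) = f (kappa x)).

Local Notation U := (unital_U f kappa).

Lemma kappa0 : kappa 0 = 0.
Proof. by apply: (addrI (kappa 0)); rewrite -kappaD !addr0. Qed.

Lemma kappaN x : kappa (- x) = - kappa x.
Proof. by apply/eqP; rewrite -subr_eq0 opprK addrC -kappaD subrr kappa0. Qed.

Lemma line_L_unital a b w :
  (inl (kappa a + w, f (kappa a + w + a) - b) \in U) =
  (polar f w (kappa w) == f (a + kappa a) - b - kappa b).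
Proof.
rewrite inE /=.
have kA : kappa (a + kappa a) = a + kappa a by rewrite kappaD kappaK addrC.
have -> : kappa a + w + a = w + (a + kappa a) by ring.
have -> : kappa a + w + kappa (kappa a + w) = w + kappa w + (a + kappa a).
  by rewrite kappaD kappaK; ring.
move: (a + kappa a) kA => A kA; rewrite kappaD kappaN kappa_f kappaD kA.
have E : f (w + A) - b + (f (kappa w + A) - kappa b) - f (w + kappa w + A) =
         f A - b - kappa b - polar f w (kappa w).
  by rewrite !(fD_polar f) polarDl; ring.
by rewrite -[_ == f _]subr_eq0 E subr_eq0 eq_sym.
Qed.

Lemma line_L_tangent a b P : line_L f a b :&: U = [set P] -> P = inl (kappa a, kappa b).
Proof.
move=> tangent; have PLU : P \in line_L f a b :&: U by rewrite tangent set11.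
case: P tangent PLU => [[x y]|[c|]] tangent PLU; move: (PLU); rewrite !inE ?andbF //=.
case/andP => /eqP yE _.
have [w xE] : exists w, x = kappa a + w by exists (x - kappa a); ring.
subst x y.
have onLU v : polar f v (kappa v) = polar f w (kappa w) ->
    inl (kappa a + v, f (kappa a + v + a) - b) \in line_L f a b :&: U.
  move=> vw; rewrite in_setI line_L_unital vw -line_L_unital inE eqxx /=.
  by move: PLU; rewrite in_setI => /andP [].
(* membership only sees the even function [polar f w (kappa w)], so [w] and [- w]
   both give points of contact *)
have := onLU (- w); rewrite kappaN (polarNl polarDl) (polarNr polarDl) opprK tangent inE.
move=> /(_ erefl) /eqP [/addrI w_opp _].
have : 2 * w = w - - w by ring.
rewrite w_opp subrr => /eqP; rewrite mulf_eq0 (negbTE two_neq0) => /eqP w0.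
subst w; have := onLU 0 erefl; rewrite inE => /andP [_].
rewrite line_L_unital kappa0 polar0l // eq_sym subr_eq0 => /eqP kb.
by rewrite !addr0 -kb (addrC (kappa a)).
Qed.

Hypothesis U_fibre : forall x, exists y, y + kappa y = f (x + kappa x).

Lemma unital_polar Q : Q \notin U -> exists2 M, is_line f M &
  forall S P, is_line f S -> Q \in S -> S :&: U = [set P] -> P \in M.
Proof.
case: Q => [[x0 y0]|[a0|]]; rewrite inE //= => QU.
- exists (line_L f (kappa x0) (kappa y0)); first by left; exists (kappa x0), (kappa y0).
  move=> S P [[a [b ->]]|[[c ->]|->]]; rewrite ?inE //=.
  + move=> /eqP -> /line_L_tangent ->.
    by rewrite !(kappaD, kappaN, kappa_f) (addrC (kappa x0)); apply/eqP; ring.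
  + move=> /eqP <- tangent; have [y yU] := U_fibre x0.
    have : inl (x0, y) \in line_N x0 :&: U by rewrite !inE /= yU !eqxx.
    have : (inr None : point F) \in line_N x0 :&: U by rewrite !inE.
    by rewrite tangent !inE => /eqP <- /eqP.
- exists (line_N (kappa a0)); first by right; left; exists (kappa a0).
  move=> S P [[a [b ->]]|[[c ->]|->]]; rewrite ?inE //=.
  + by move=> /eqP <- /line_L_tangent -> /=.
  + move=> _ tangent; have : P \in line_inf F :&: U by rewrite tangent set11.
    by case: P {tangent} => [[x y]|[c|]]; rewrite !inE.
Qed.

Lemma collineation_tangent_points (phi : point F -> point F) (V : {set point F}) Q :
  collineation f phi -> phi @: V = U -> Q \notin V -> exists2 M, is_line f M &
  forall S P, is_line f S -> Q \in S -> S :&: V = [set P] -> phi P \in M.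
Proof.
move=> [[psi phiK _] phi_line] phiV QV; have phi_inj := can_inj phiK.
have [|M M_line M_tangent] := @unital_polar (phi Q); first by rewrite -phiV mem_imset.
exists M => // S P S_line QS SV; apply: (M_tangent _ _ (phi_line _ S_line)).
  exact: imset_f.
by rewrite -phiV -imsetI ?SV ?imset_set1 // => x y _ _; apply: phi_inj.
Qed.

End Unital.

Definition Fq_multiple (F : finFieldType) (q : nat) (theta y : F) : bool :=
  [exists t : F, (t ^+ q == t) && (y == t * theta)].

Section UnitalTheta.
Variables (F : finFieldType) (q : nat) (f f0 f1 : F -> F) (xi theta theta0 theta1 : F).
Hypotheses (q_pchar : [pchar F].-nat q) (xi_notin_Fq : xi ^+ q != xi)
  (theta0q : theta0 ^+ q = theta0) (theta1q : theta1 ^+ q = theta1)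
  (thetaE : theta = theta0 + theta1 * xi) (theta_neq0 : theta != 0)
  (f0q : forall x, f0 x ^+ q = f0 x) (f1q : forall x, f1 x ^+ q = f1 x)
  (fE : forall x, f x = f0 x + f1 x * xi).

Local Notation Fq_mult := (Fq_multiple q theta).
Local Notation cross z := (theta1 * f0 z - theta0 * f1 z).

Lemma Fq_multipleP y : reflect (exists2 t, t ^+ q = t & y = t * theta) (Fq_mult y).
Proof.
apply: (iffP existsP) => [[t /andP [/eqP tq /eqP yE]]|[t tq yE]]; exists t => //.
by rewrite tq yE !eqxx.
Qed.

Lemma Fq_multipleB y y' : Fq_mult y -> Fq_mult y' -> Fq_mult (y - y').
Proof.
move=> /Fq_multipleP [t tq ->] /Fq_multipleP [t' t'q ->]; apply/Fq_multipleP.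
by exists (t - t'); rewrite ?exprBn_pchar ?tq ?t'q // mulrBl.
Qed.

Lemma Fq_coord_inj a b c d : a ^+ q = a -> b ^+ q = b -> c ^+ q = c -> d ^+ q = d ->
  a + b * xi = c + d * xi -> a = c /\ b = d.
Proof.
move=> aq bq cq dq abcd; have [bd|bd] := eqVneq b d.
  by split=> //; move: abcd; rewrite bd => /addIr.
have bd0 : b - d != 0 by rewrite subr_eq0.
have xiE : xi = (c - a) / (b - d).
  by apply: (mulIf bd0); rewrite divfK // -[c](addrK (d * xi)) -abcd; ring.
by move: xi_notin_Fq; rewrite xiE exprMn exprVn !exprBn_pchar // aq bq cq dq eqxx.
Qed.

Lemma Fq_multiple_cross w : Fq_mult (f w) -> cross w = 0.
Proof.
move=> /Fq_multipleP [s sq fw].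
have [-> ->] : f0 w = s * theta0 /\ f1 w = s * theta1.
  apply: Fq_coord_inj; rewrite ?exprMn ?sq ?theta0q ?theta1q //.
  by rewrite -fE fw thetaE; ring.
by ring.
Qed.

Lemma cross_Fq_multiple z z' : cross z = cross z' -> Fq_mult (f z - f z').
Proof.
move=> /eqP; rewrite -subr_eq0 => /eqP cross0; apply/Fq_multipleP.
set a := f0 z - f0 z'; set b := f1 z - f1 z'.
have aq : a ^+ q = a by rewrite exprBn_pchar ?f0q.
have bq : b ^+ q = b by rewrite exprBn_pchar ?f1q.
have ab0 : theta1 * a = theta0 * b.
  by apply/eqP; rewrite -subr_eq0 -cross0; apply/eqP; rewrite /a /b; ring.
have fzz : f z - f z' = a + b * xi by rewrite !fE /a /b; ring.
have [theta1_0|theta1_neq0] := eqVneq theta1 0.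
  have theta0_neq0 : theta0 != 0 by move: theta_neq0; rewrite thetaE theta1_0 mul0r addr0.
  have b0 : b = 0.
    apply/eqP; move: ab0; rewrite theta1_0 mul0r => /esym/eqP.
    by rewrite mulf_eq0 (negbTE theta0_neq0).
  exists (a / theta0); first by rewrite exprMn exprVn aq theta0q.
  by rewrite fzz thetaE theta1_0 b0; field.
exists (b / theta1); first by rewrite exprMn exprVn bq theta1q.
have aE : a = theta0 * b / theta1 by rewrite -ab0; field.
by rewrite fzz aE thetaE; field.
Qed.

Hypotheses (f_0 : f 0 = 0)
  (cross_count0 : #|[set x | cross x == 0]| = 1).

Lemma Fq_multiple_f_eq0 w : Fq_mult (f w) -> w = 0.
Proof.
move=> fw; have /eqP/cards1P [z0 Z0] := cross_count0.
have : 0 \in [set x | cross x == 0].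
  by rewrite inE Fq_multiple_cross // f_0 -(subrr (f w)) Fq_multipleB.
have : w \in [set x | cross x == 0] by rewrite inE Fq_multiple_cross.
by rewrite Z0 !inE => /eqP -> /eqP.
Qed.

Lemma Utheta_tangent y0 z : Fq_mult (y0 - f z) ->
  line_L f z (f z - y0) :&: unital_Utheta q theta = [set inl (- z, y0 - f z)].
Proof.
move=> foot; apply/setP => [[[x y]|[c|]]]; rewrite !inE ?andbF //=.
rewrite -/(Fq_mult y); apply/andP/eqP => [[/eqP yE yU]|[-> ->]].
  have xz : x + z = 0.
    apply: Fq_multiple_f_eq0; have := Fq_multipleB yU foot.
    by rewrite yE (_ : _ - _ - _ = f (x + z)) //; ring.
  have -> : x = - z by apply/eqP; rewrite -addr_eq0 xz.
  by rewrite yE xz f_0; congr (inl (_, _)); ring.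
by rewrite addNr f_0; split=> //; apply/eqP; ring.
Qed.

Hypotheses (polarDl : forall u u' v, polar f (u + u') v = polar f u v + polar f u' v)
  (fN : forall x, f (- x) = f x) (f_planar : planar f) (two_neq0 : (2 : F) != 0).
Variable kappa : F -> F.
Hypotheses (kappaD : forall x y, kappa (x + y) = kappa x + kappa y)
  (kappaK : forall x, kappa (kappa x) = x) (kappa_f : forall x, kappa (f x) = f (kappa x))
  (U_fibre : forall x, exists y, y + kappa y = f (x + kappa x))
  (cross_count1 : (2 < #|[set x | (cross x == 1)%R]|)%N).

Lemma Utheta_U_not_equivalent phi :
  collineation f phi -> phi @: unital_Utheta q theta = unital_U f kappa -> False.
Proof.
move=> phi_coll phiU.
have /card_gt2P [z1 [z2 [z3 [[Z1 Z2 Z3] [n12 n23 n31]]]]] := cross_count1.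
rewrite !inE in Z1 Z2 Z3.
have Q_out : inl (0, f z1) \notin unital_Utheta q theta.
  by rewrite inE /=; apply: contraTN Z1 => /Fq_multiple_cross ->; rewrite eq_sym oner_eq0.
have [M M_line M_feet] := collineation_tangent_points polarDl two_neq0 kappaD kappaK kappa_f
  U_fibre phi_coll phiU Q_out.
have foot_M z : cross z == 1 -> phi (inl (- z, f z1 - f z)) \in M.
  move=> Z; apply: (M_feet (line_L f z (f z - f z1))).
  - by left; exists z, (f z - f z1).
  - by rewrite inE /= add0r; apply/eqP; ring.
  by apply/Utheta_tangent/cross_Fq_multiple; rewrite (eqP Z1) (eqP Z).
have nz12 : - z1 != - z2 by rewrite eqr_opp.
have [a [b [L1 L2]]] := line_L_through f_planar (f z1 - f z1) (f z1 - f z2) nz12.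
have L3 : inl (- z3, f z1 - f z3) \in line_L f a b.
  apply: (collineation_collinear f_planar phi_coll M_line _ _ L1 L2
            (foot_M _ Z1) (foot_M _ Z2) (foot_M _ Z3)).
    by left; exists a, b.
  by apply: contra_neq nz12 => -[].
exact: (reflected_graph_not_collinear polarDl fN f_planar two_neq0 n12 n23 n31 L1 L2 L3).
Qed.

End UnitalTheta.

Unset Implicit Arguments.

Theorem theorem4p2 (p n q : nat) (F : finFieldType) (f kappa : F -> F)
  (xi theta theta0 theta1 : F) (f0 f1 : F -> F) :
  prime p -> odd p -> (0 < n)%N -> q = (p ^ n)%N -> #|F| = (q ^ 2)%N ->
  is_DO p (2 * n) f -> planar f ->
  (forall x y, kappa (x + y) = kappa x + kappa y) ->
  (forall x, kappa (kappa x) = x) ->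
  (forall x, kappa (f x) = f (kappa x)) ->
  (forall x, #|[set y : F | y + kappa y == f (x + kappa x)]| = q) ->
  xi ^+ q != xi ->
  theta0 ^+ q = theta0 -> theta1 ^+ q = theta1 -> theta = theta0 + theta1 * xi ->
  (forall x, f0 x ^+ q = f0 x) -> (forall x, f1 x ^+ q = f1 x) ->
  (forall x, f x = f0 x + f1 x * xi) ->
  theta != 0 ->
  (forall c : F, c ^+ q = c ->
     #|[set x : F | theta1 * f0 x - theta0 * f1 x == c]| =
       (if c != 0 then q.+1 else 1%N)) ->
  ~ (exists phi : point F -> point F,
       collineation f phi /\ phi @: unital_Utheta q theta = unital_U f kappa).
Proof.
move=> p_prime p_odd n_gt0 qE cardF f_DO f_planar kappaD kappaK kappa_f U_card.
move=> xi_notin theta0q theta1q thetaE f0q f1q fE theta_neq0 cross_count [phi [phi_coll phiU]].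
have pF : p \in [pchar F] by apply: (@card_finPcharP _ _ (n * 2)); rewrite // cardF qE expnM.
have q_pchar : [pchar F].-nat q by rewrite qE pchar_natX.
have two_neq0 := pchar_odd_two_neq0 pF p_odd.
have polarDl := DO_polarDl f_DO pF.
have fN := DO_fN f_DO p_odd.
have f_0 := polarf0 polarDl.
have q_gt2 : (2 < q)%N.
  rewrite qE (leq_trans (odd_prime_gt2 p_odd p_prime)) // -{1}(expn1 p).
  exact: leq_pexp2l (prime_gt0 p_prime) n_gt0.
have U_fibre x : exists y, y + kappa y = f (x + kappa x).
  have /card_gt0P [y] : (0 < #|[set y | (y + kappa y == f (x + kappa x))%R]|)%N.
    by rewrite U_card (ltn_trans _ q_gt2).
  by rewrite inE => /eqP; exists y.
have cross_count0 : #|[set x | theta1 * f0 x - theta0 * f1 x == 0]| = 1%N.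
  by rewrite cross_count ?eqxx // expr0n gtn_eqF // (ltn_trans _ q_gt2).
have cross_count1 : (2 < #|[set x | (theta1 * f0 x - theta0 * f1 x == 1)%R]|)%N.
  by rewrite cross_count ?expr1n ?oner_neq0 // ltnS ltnW.
exact: (Utheta_U_not_equivalent q_pchar xi_notin theta0q theta1q thetaE theta_neq0 f0q f1q fE
  f_0 cross_count0 polarDl fN f_planar two_neq0 kappaD kappaK kappa_f U_fibre cross_count1
  phi_coll phiU).
Qed.
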